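(* Let $k\ge3$ and let $B$ be a bipartite graph with left vertex set $I$ and right vertex set $J$, left-regular of degree $k$ and with right degree $O(k)$. The graph $G=G(B)$ (constructed explicitly from $B$ as described in the context) has $O(k^4|I|)$ vertices and maximum vertex degree $O(k^2)$, and $G$ is $k$-colourable if and only if it is possible to map the pigeons $I$ to holes in $J$, each pigeon $i$ to a hole in $J_i$, in a one-to-one fashion, i.e., if and only if the equations $$\sum_{j\in J_i} p_{i,j}=1\ (i\in I),\qquad p_{i,j}p_{i,j'}=0\ (i\in I,\ j\neq j'\in J_i),\qquad p_{i,j}p_{i',j}=0\ (i\neq i'\in I,\ j\in J_i\cap J_{i'})$$ are simultaneously satisfiable over $\{0,1\}$.
   Context: $J_i$ is the set of $k$ neighbours of pigeon $i$ in $B$. Construction: for each pigeon $i$ fix an enumeration of its $k$ edges by $1,\dots,k$. For every pair of distinct pigeons $i\ne i'$ and $c,c'\in[k]$ such that the $c$th edge of $i$ and the $c'$th edge of $i'$ lead to the same hole, add a gadget: two disjoint $k$-cliques $l_1,\dots,l_k$ and $r_1,\dots,r_k$; edge $\{i,l_1\}$; a new vertex pre-coloured $c$ adjacent to $l_2,\dots,l_{k-1}$; edge $\{i',r_1\}$; a new vertex pre-coloured $c'$ adjacent to $r_2,\dots,r_{k-1}$; if $c=c'$ add edge $\{l_k,r_k\}$, otherwise identify $l_k$ with $r_k$. Pigeon vertices are shared among gadgets, all other vertices are new. Call the union $\widehat{G}$. Then take new vertices $z_1,\dots,z_M$ with $M=O(k^3|I|)$ large enough, and make every set of $k$ consecutive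 vertices $\{z_t,\dots,z_{t+k-1}\}$ a $k$-clique. Process the pre-coloured vertices of $\widehat{G}$ one by one: a vertex pre-coloured $c$ is identified with the first vertex $z_t$ with $t\equiv c \pmod k$ not yet used. The resulting graph, with no pre-colouring, is $G(B)$. $k$-colourable means having a map to $[k]$ with distinct colours on the endpoints of every edge. *)

From mathcomp Require Import all_boot.
Set Implicit Arguments. Unset Strict Implicit. Unset Printing Implicit Defensive.

(* The bipartite graph B: pigeons 'I_n, holes 'I_m; pigeon i has exactly k
   neighbours, enumerated (the fixed enumeration of its edges) by nb i : 'I_k -> 'I_m,
   which is required to be injective.  Colours / edge labels [k] are 'I_k
   (0-indexed: label c+1 of the paper is c here). *)

Definition Jset {n m k : nat} (nb : 'I_n -> 'I_k -> 'I_m) (i : 'I_n) : {set 'I_m} :=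
  [set nb i c | c : 'I_k].

(* gadget indices: (i,c,i',c') with i < i' (one gadget per unordered pair of
   distinct pigeons) such that the c-th edge of i and the c'-th edge of i'
   lead to the same hole *)
Definition gad_pred {n m k : nat} (nb : 'I_n -> 'I_k -> 'I_m)
    (g : ('I_n * 'I_k) * ('I_n * 'I_k)) : bool :=
  (g.1.1 < g.2.1) && (nb g.1.1 g.1.2 == nb g.2.1 g.2.2).

Definition gadget {n m k : nat} (nb : 'I_n -> 'I_k -> 'I_m) :=
  {g : ('I_n * 'I_k) * ('I_n * 'I_k) | gad_pred nb g}.

Section Acc.
Context {n m k : nat} {nb : 'I_n -> 'I_k -> 'I_m}.
Definition gi (g : gadget nb) : 'I_n := (val g).1.1.
Definition gc (g : gadget nb) : 'I_k := (val g).1.2.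
Definition gi' (g : gadget nb) : 'I_n := (val g).2.1.
Definition gc' (g : gadget nb) : 'I_k := (val g).2.2.
End Acc.

Definition pre_t {n m k : nat} (nb : 'I_n -> 'I_k -> 'I_m) := (gadget nb * bool)%type.

Definition pre_col {n m k : nat} {nb : 'I_n -> 'I_k -> 'I_m} (p : pre_t nb) : 'I_k :=
  if p.2 then gc' p.1 else gc p.1.

(* number M of chain vertices z_1..z_M (z_t is represented by t-1 : 'I_M):
   k times the number of pre-coloured vertices, so that every residue class
   mod k contains enough z's *)
Definition zM {n m k : nat} (nb : 'I_n -> 'I_k -> 'I_m) : nat :=
  k * #|{: pre_t nb}|.

(* raw vertices (before identifications):
   inl (inl i)            pigeon i
   inl (inr (g,false,a))  l_(a+1) of gadget g
   inl (inr (g,true,a))   r_(a+1) of gadget g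
   inr (inl p)            pre-coloured vertex p
   inr (inr t)            z_(t+1) *)
Definition raw_t {n m k : nat} (nb : 'I_n -> 'I_k -> 'I_m) :=
  (('I_n + (gadget nb * bool * 'I_k)) + (pre_t nb + 'I_(zM nb)))%type.

Definition rawE0 {n m k : nat} {nb : 'I_n -> 'I_k -> 'I_m} (x y : raw_t nb) : bool :=
  match x, y with
  | inl (inr (g, s, a)), inl (inr (g2, s2, b)) =>
      (g == g2) &&
      (((s == s2) && (a != b))                       (* the two k-cliques *)
       || [&& s != s2, gc g == gc' g,                (* edge {l_k, r_k} if c = c' *)
              val a == k.-1 & val b == k.-1])
  | inl (inl i), inl (inr (g, s, a)) =>               (* {i,l_1}, {i',r_1} *)
      (val a == 0) && (i == if s then gi' g else gi g)
  | inr (inl (g, s)), inl (inr (g2, s2, a)) =>        (* pre-coloured vertex to l_2..l_(k-1) *)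
      [&& g == g2, s == s2 & 0 < val a < k.-1]
  | inr (inr t), inr (inr t') =>                      (* chain: windows of k consecutive z's *)
      (t != t') &&
      [exists s : 'I_(zM nb), [&& s + k <= zM nb, s <= minn t t' & maxn t t' < s + k]]
  | _, _ => false
  end.

Definition rawE {n m k : nat} {nb : 'I_n -> 'I_k -> 'I_m} (x y : raw_t nb) : bool :=
  rawE0 x y || rawE0 y x.

(* identifications: r_k := l_k when c <> c'; pre-coloured p := z_(sigma p) *)
Definition rep {n m k : nat} {nb : 'I_n -> 'I_k -> 'I_m}
    (sigma : pre_t nb -> 'I_(zM nb)) (x : raw_t nb) : raw_t nb :=
  match x with
  | inl (inr (g, true, a)) =>
      if (gc g != gc' g) && (val a == k.-1) then inl (inr (g, false, a)) else x
  | inr (inl p) => inr (inr (sigma p))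
  | _ => x
  end.

(* the graph G(B): vertex set = classes of the identification (represented by
   their representatives), adjacency = image of the raw edges *)
Definition GV {n m k : nat} {nb : 'I_n -> 'I_k -> 'I_m}
    (sigma : pre_t nb -> 'I_(zM nb)) : {set raw_t nb} :=
  [set rep sigma x | x : raw_t nb].

Definition Gadj {n m k : nat} {nb : 'I_n -> 'I_k -> 'I_m}
    (sigma : pre_t nb -> 'I_(zM nb)) (x y : raw_t nb) : bool :=
  [exists a, exists b, [&& rawE a b, rep sigma a == x & rep sigma b == y]].

Definition Gdeg {n m k : nat} {nb : 'I_n -> 'I_k -> 'I_m}
    (sigma : pre_t nb -> 'I_(zM nb)) (x : raw_t nb) : nat :=
  #|[set y in GV sigma | Gadj sigma x y]|.

Definition G_colourable {n m k : nat} {nb : 'I_n -> 'I_k -> 'I_m}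
    (sigma : pre_t nb -> 'I_(zM nb)) : Prop :=
  exists f : raw_t nb -> 'I_k,
    forall x y, x \in GV sigma -> y \in GV sigma -> Gadj sigma x y -> f x != f y.

Definition php_map {n m k : nat} (nb : 'I_n -> 'I_k -> 'I_m) : Prop :=
  exists h : 'I_n -> 'I_m, (forall i, h i \in Jset nb i) /\ injective h.

Definition php_eqs {n m k : nat} (nb : 'I_n -> 'I_k -> 'I_m) : Prop :=
  exists p : 'I_n -> 'I_m -> bool,
    [/\ forall i, \sum_(j in Jset nb i) (p i j : nat) = 1,
        forall i j j', j \in Jset nb i -> j' \in Jset nb i -> j != j' ->
          (p i j : nat) * p i j' = 0
      & forall i i' j, i != i' -> j \in Jset nb i -> j \in Jset nb i' ->
          (p i j : nat) * p i' j = 0].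

From mathcomp Require Import all_boot fingroup perm zify.
Set Implicit Arguments. Unset Strict Implicit. Unset Printing Implicit Defensive.

(* In a k-colouring, the chain z_1 ... z_M (every k consecutive vertices a
   clique) is periodic of period k and uses all k colours on z_1 ... z_k, so
   every pre-coloured vertex effectively carries its prescribed colour.  Let
   pigeon i choose the edge whose label is its own colour.  In the gadget of the
   c-th edge of i and the c'-th edge of i', the colour c avoids l_1 if i chose c
   and always avoids l_2 ... l_(k-1), so it lands on l_k; likewise c' on r_k;
   but l_k and r_k are adjacent (c = c') or equal (c <> c'), so two pigeons
   never choose edges into the same hole.  Conversely, an injective choice of
   edges gives an explicit colouring: at most one pigeon of each gadget uses the
   gadget's hole, which leaves enough room at the ends l_k, r_k.  The size and
   degree bounds hold because a pigeon lies in at most k * d k gadgets. *)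

Lemma neq_modn_window a b k : a < b < a + k -> a %% k != b %% k.
Proof.
move=> /andP [ab bak]; rewrite -(subnKC (ltnW ab)) -{1}[a]addn0 eqn_modDl mod0n.
by rewrite modn_small; lia.
Qed.

Lemma card_le_fibres (T U : finType) (f : T -> U) (A : {set T}) b :
  (forall u, #|[set x in A | f x == u]| <= b) -> #|A| <= #|U| * b.
Proof.
move=> fibre_le; rewrite -sum1_card (partition_big f xpredT) //=.
rewrite -sum_nat_const; apply: leq_sum => u _.
by apply: leq_trans (fibre_le u); rewrite sum1_card; apply: subset_leq_card;
   apply/subsetP => x; rewrite !inE.
Qed.

Section ColourChoices.
Variable T : finType.

Definition other (a b : T) : T := odflt a [pick x | (x != a) && (x != b)].

Lemma otherP a b : 2 < #|T| -> (other a b != a) && (other a b != b).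
Proof.
rewrite /other; case: pickP => [x //|none] T_big.
have : #|T| <= #|[set a; b]|.
  by rewrite -cardsT subset_leq_card //; apply/subsetP => x _; rewrite !inE;
     move: (none x); case: (x == a); case: (x == b).
by rewrite cards2 leqNgt; case: (a != b); rewrite /= ?T_big ?(ltnW T_big).
Qed.

Definition perm_pair (a b u v : T) : {perm T} :=
  (tperm a u * tperm (tperm a u b) v)%g.

Lemma perm_pairL a b u v : a != b -> u != v -> perm_pair a b u v a = u.
Proof.
move=> ab uv; rewrite permM tpermL tpermD 1?eq_sym //.
apply: contra ab => /eqP ub; apply/eqP.
by apply: (perm_inj (s := tperm a u)); rewrite tpermL.
Qed.

Lemma perm_pairR a b u v : perm_pair a b u v b = v.
Proof. by rewrite permM tpermL. Qed.

End ColourChoices.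

Section WindowColouring.
Variables (T : finType) (k N : nat) (f : nat -> T).
Hypothesis card_T : #|T| <= k.
Hypothesis window_inj : forall s u v,
  s + k <= N -> s <= u < s + k -> s <= v < s + k -> f u = f v -> u = v.

Lemma window_shift t : t + k < N -> f (t + k) = f t.
Proof.
(* Otherwise f would be injective on t .. t + k: any two of these points but the
   two ends lie in a common window. *)
move=> tkN; apply/eqP; apply/negPn/negP => ends_neq.
suff /leq_card : injective (fun j : 'I_k.+1 => f (t + j)) by rewrite card_ord; lia.
move=> j j' fjj'; apply: val_inj => /=; apply/eqP; rewrite -(eqn_add2l t); apply/eqP.
have := ltn_ord j; have := ltn_ord j' => j'_le j_le.
have [low|not_low] := boolP ((j < k) && (j' < k)).
  by apply: (window_inj (s := t)) fjj'; lia.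
have [high|not_high] := boolP ((0 < j) && (0 < j')).
  by apply: (window_inj (s := t.+1)) fjj'; lia.
case/negP: ends_neq; have [j0|j_pos] := posnP j.
  have j'_k : j' = k :> nat by lia.
  by rewrite -j'_k -fjj' j0 addn0.
have j_k : j = k :> nat by lia.
have j'0 : j' = 0 :> nat by lia.
by rewrite -j_k fjj' j'0 addn0.
Qed.

Lemma window_modn t : t < N -> f t = f (t %% k).
Proof.
rewrite {1 2}(divn_eq t k); elim: (t %/ k) => [|q IH]; first by rewrite add0n.
move=> tN; rewrite mulSn -addnA addnC window_shift ?IH //; lia.
Qed.

Lemma window_onto : k <= N -> forall x : T, exists c : 'I_k, f c = x.
Proof.
move=> kN x.
have f_inj : injective (fun c : 'I_k => f c).
  move=> c c' fcc'; apply: val_inj; apply: (window_inj (s := 0)) fcc';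
  by have := ltn_ord c; have := ltn_ord c'; lia.
have card_T' : #|T| <= #|'I_k| by rewrite card_ord.
have /codomP [c ->] := inj_card_onto f_inj card_T' x.
by exists c.
Qed.

End WindowColouring.

Section Reduction.
Variables (d k n m : nat) (nb : 'I_n -> 'I_k -> 'I_m).
Hypothesis k_ge3 : 3 <= k.
Hypothesis nb_inj : forall i, injective (nb i).
Hypothesis hole_deg : forall j : 'I_m, #|[set i | j \in Jset nb i]| <= d * k.
Variable sigma : pre_t nb -> 'I_(zM nb).
Hypothesis sigma_inj : injective sigma.
Hypothesis sigma_mod : forall p, val (sigma p) = val (pre_col p) %[mod k].

Definition gpig (g : gadget nb) (s : bool) : 'I_n := if s then gi' g else gi g.
Definition gcol (g : gadget nb) (s : bool) : 'I_k := if s then gc' g else gc g.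

Lemma gadget_lt (g : gadget nb) : gi g < gi' g.
Proof. by case: g => [[[i c] [i' c']] p]; case/andP: (p). Qed.

Lemma gadget_hole (g : gadget nb) s : nb (gpig g s) (gcol g s) = nb (gi g) (gc g).
Proof. by case: g => [[[i c] [i' c']] p]; case/andP: (p) => _ /eqP; case: s. Qed.

Lemma gadget_inj s (g1 g2 : gadget nb) :
  gpig g1 s = gpig g2 s -> gcol g1 s = gcol g2 s -> gpig g1 (~~ s) = gpig g2 (~~ s) ->
  g1 = g2.
Proof.
move=> pig_s col_s pig_ns.
have col_ns : gcol g1 (~~ s) = gcol g2 (~~ s).
  by apply: (nb_inj (i := gpig g1 (~~ s))); rewrite {2}pig_ns !gadget_hole
       -(gadget_hole g1 s) -(gadget_hole g2 s) pig_s col_s.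
apply: val_inj; move: pig_s col_s pig_ns col_ns; rewrite /gpig /gcol /gi /gc /gi' /gc'.
by case: s; case: g1 g2 => [[[? ?] [? ?]] ?] [[[? ?] [? ?]] ?] /= -> -> -> ->.
Qed.

Lemma card_gadgets_at s i : #|[set g : gadget nb | gpig g s == i]| <= k * (d * k).
Proof.
rewrite -[k in k * _]card_ord; apply: (@card_le_fibres _ _ (gcol^~ s) _ (d * k)) => c.
apply: leq_trans (hole_deg (nb i c)).
rewrite -(@card_in_imset _ _ (gpig^~ (~~ s))); last first.
  move=> g1 g2; rewrite !inE => /andP [/eqP g1i /eqP g1c] /andP [/eqP g2i /eqP g2c].
  by apply: (gadget_inj (s := s)); rewrite ?g1i ?g2i ?g1c ?g2c.
apply: subset_leq_card; apply/subsetP => x /imsetP [g]; rewrite !inE.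
move=> /andP [/eqP <- /eqP <-] ->.
by rewrite gadget_hole -(gadget_hole g (~~ s)); apply: imset_f.
Qed.

Lemma card_gadgets : #|{: gadget nb}| <= n * (k * (d * k)).
Proof.
rewrite -cardsT -[n in n * _]card_ord.
apply: (@card_le_fibres _ _ (gpig^~ false) _ (k * (d * k))) => i.
by apply: leq_trans (card_gadgets_at false i); apply: subset_leq_card;
   apply/subsetP => g; rewrite !inE.
Qed.

Lemma card_raw : #|{: raw_t nb}| <= (6 * d + 7) * k ^ 4 * n.
Proof.
rewrite !card_sum !card_prod card_bool !card_ord /zM card_prod card_bool.
have := card_gadgets; set G := #|{: gadget nb}| => G_le.
have kG_le : k * G <= k * (n * (k * (d * k))) by rewrite leq_mul2l G_le orbT.
have k4_pos : 1 <= k ^ 4 by rewrite expn_gt0; case: (k) k_ge3.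
rewrite (_ : k ^ 4 = k * (k * (k * k))) in k4_pos *; last by rewrite !expnS expn0 muln1.
nia.
Qed.

Lemma card_GV : #|GV sigma| <= (6 * d + 7) * k ^ 4 * n.
Proof. exact: leq_trans (max_card _) card_raw. Qed.

Local Notation pig i := (inl (inl i) : raw_t nb).
Local Notation cl g s a := (inl (inr (g, s, a)) : raw_t nb).
Local Notation pv p := (inr (inl p) : raw_t nb).
Local Notation zv t := (inr (inr t) : raw_t nb).

Lemma k_gt0 : 0 < k. Proof. exact: ltn_trans k_ge3. Qed.
Lemma pred_k_lt : k.-1 < k. Proof. by rewrite ltn_predL k_gt0. Qed.

Definition l1 : 'I_k := Ordinal k_gt0.
Definition lk : 'I_k := Ordinal pred_k_lt.

Lemma l1_neq_lk : l1 != lk.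
Proof. by rewrite -(inj_eq val_inj) /=; lia. Qed.

Lemma card_colours_le : #|'I_k| <= k. Proof. by rewrite card_ord. Qed.
Lemma card_colours_gt2 : 2 < #|'I_k|. Proof. by rewrite card_ord. Qed.

Definition raw_nbrs (a : raw_t nb) : {set raw_t nb} := [set b | rawE a b].

Lemma card_nbrs_pig i : #|raw_nbrs (pig i)| <= 2 * (k * (d * k)).
Proof.
pose at_side s := [set cl g s l1 | g in [set g : gadget nb | gpig g s == i]].
apply: (@leq_trans #|at_side false :|: at_side true|).
  apply/subset_leq_card/subsetP => -[[i'|[[g s] a]]|[[g s]|t]]; rewrite !inE /rawE //= ?orbF.
  move=> /andP [/eqP a0 /eqP i_g]; rewrite (_ : a = l1); last exact: val_inj.
  by case: s i_g => i_g; apply/orP; [right | left]; apply: imset_f; rewrite inE i_g.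
apply: leq_trans (leq_card_setU _ _) _.
by rewrite mul2n -addnn leq_add // (leq_trans (leq_imset_card _ _)) ?card_gadgets_at.
Qed.

Lemma card_nbrs_clique g s a : #|raw_nbrs (cl g s a)| <= 2 * k + 2.
Proof.
apply: (@leq_trans #|[set cl g sb.1 sb.2 | sb : bool * 'I_k] :|:
                     [set pig (gpig g s); pv (g, s)]|).
  apply/subset_leq_card/subsetP => -[[i|[[g2 s2] b]]|[[g2 s2]|t]]; rewrite !inE /rawE //=.
  - by move=> /andP [_ /eqP ->]; rewrite eqxx orbT.
  - by case/orP => /andP [/eqP <- _]; apply/orP; left; apply/imsetP; exists (s2, b).
  - by move=> /and3P [/eqP <- /eqP <- _]; rewrite eqxx !orbT.
apply: leq_trans (leq_card_setU _ _) _.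
by rewrite leq_add ?cards2 ?(leq_trans (leq_imset_card _ _)) // card_prod card_bool card_ord.
Qed.

Lemma card_nbrs_pre p : #|raw_nbrs (pv p)| <= k.
Proof.
case: p => g s; apply: (@leq_trans #|[set cl g s b | b : 'I_k]|).
  apply/subset_leq_card/subsetP => -[[i|[[g2 s2] b]]|[[g2 s2]|t]]; rewrite !inE /rawE //= ?orbF.
  by move=> /and3P [/eqP <- /eqP <- _]; apply: imset_f.
by rewrite (leq_trans (leq_imset_card _ _)) ?card_ord.
Qed.

Lemma card_nbrs_chain t : #|raw_nbrs (zv t)| <= 2 * k.
Proof.
apply: (@leq_trans #|[set zv (insubd t (t + u - k)) | u : 'I_(2 * k)]|); last first.
  by rewrite (leq_trans (leq_imset_card _ _)) ?card_ord.
apply/subset_leq_card/subsetP => -[[i|[[g2 s2] b]]|[[g2 s2]|t']]; rewrite !inE /rawE //=.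
move=> adj; have near_t : (t < t' + k) && (t' < t + k).
  by case/orP: adj => /andP [_ /existsP [s /and3P [_ ? ?]]]; apply/andP; split; lia.
have u_lt : t' + k - t < 2 * k by lia.
apply/imsetP; exists (Ordinal u_lt) => //; congr (inr (inr _)); apply: val_inj.
by rewrite val_insubd /= (_ : t + (t' + k - t) - k = t') ?ltn_ord //; lia.
Qed.

Lemma card_raw_nbrs a : #|raw_nbrs a| <= 2 * (k * (d * k)) + 2 * k + 2.
Proof.
case: a => [[i|[[g s] a]]|[p|t]]; [have := card_nbrs_pig i | have := card_nbrs_clique g s a
  | have := card_nbrs_pre p | have := card_nbrs_chain t]; lia.
Qed.

Definition partner (y : raw_t nb) : raw_t nb :=
  match y with
  | inl (inr (g, false, a)) => cl g true a
  | inr (inr t) => if [pick p | sigma p == t] is Some p then pv p else y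
  | _ => y
  end.

Lemma rep_fibre a y : rep sigma a = y -> a = y \/ a = partner y.
Proof.
case: a => [[i|[[g [|]] b]]|[p|t]] /=; try by move=> <-; left.
  by case: ifP => _ <-; [right | left].
move=> <-; right => /=; case: pickP => [p' /eqP /sigma_inj -> //|/(_ p)].
by rewrite eqxx.
Qed.

Lemma Gdeg_le x : Gdeg sigma x <= (6 * d + 7) * k ^ 2.
Proof.
apply: (@leq_trans #|rep sigma @: (raw_nbrs x :|: raw_nbrs (partner x))|).
  apply/subset_leq_card/subsetP => y; rewrite inE => /andP [_].
  case/existsP => a /existsP [b /and3P [ab /eqP ax /eqP <-]].
  by apply: imset_f; case: (rep_fibre ax) => <-; rewrite !inE ab ?orbT.
apply: leq_trans (leq_imset_card _ _) _; apply: leq_trans (leq_card_setU _ _) _.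
apply: leq_trans (leq_add (card_raw_nbrs x) (card_raw_nbrs (partner x))) _.
rewrite -mulnn; have := k_ge3; nia.
Qed.

Lemma php_map_labels :
  php_map nb <-> exists lab : 'I_n -> 'I_k, injective (fun i => nb i (lab i)).
Proof.
split=> [[h [hJ h_inj]] | [lab lab_inj]]; last first.
  by exists (fun i => nb i (lab i)); split=> // i; apply: imset_f.
have /fin_all_exists [lab labP] : forall i, exists c, h i = nb i c.
  by move=> i; case/imsetP: (hJ i) => c _ ->; exists c.
by exists lab => i i' /=; rewrite -!labP => /h_inj.
Qed.

Lemma php_map_eqs : php_map nb <-> php_eqs nb.
Proof.
split=> [[h [hJ h_inj]] | [p [p_one _ p_excl]]].
  exists (fun i j => h i == j); split.
  - move=> i; rewrite (bigD1 (h i)) //= eqxx big1 // => j /andP [_ hj].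
    by rewrite eq_sym (negbTE hj).
  - by move=> i j j' _ _ jj'; case: eqP => // ->; rewrite (negbTE jj').
  - move=> i i' j ii' _ _; case: eqP => // <-.
    by rewrite (inj_eq h_inj) eq_sym (negbTE ii').
have /fin_all_exists [h hP] : forall i, exists j, (j \in Jset nb i) && p i j.
  move=> i; apply/existsP; apply: contraT; rewrite negb_exists => /forallP none.
  move: (p_one i); rewrite big1 // => j jJ.
  by move: (none j); rewrite jJ; case: (p i j).
exists h; split=> [i | i i' hii']; first by case/andP: (hP i).
apply/eqP; apply: contraT => ii'.
case/andP: (hP i) => hJ pi; case/andP: (hP i') => hJ' pi'.
by move: (p_excl i i' (h i) ii' hJ); rewrite {1 3}hii' pi pi' => /(_ hJ').
Qed.

Section ColouringOfLabels.
Variable lab : 'I_n -> 'I_k.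
Hypothesis lab_inj : injective (fun i => nb i (lab i)).

Definition uses (g : gadget nb) s := lab (gpig g s) == gcol g s.

Lemma uses_not_both g : ~~ (uses g false && uses g true).
Proof.
apply/negP => /andP [/eqP used_l /eqP used_r]; have := gadget_lt g.
rewrite (@lab_inj (gi g) (gi' g)) ?ltnn //=.
by rewrite [lab _]used_l [lab _]used_r -[LHS](gadget_hole g false) (gadget_hole g true).
Qed.

(* The colour of l_k (s = false) or r_k (s = true): the two ends differ when
   c = c', since they are adjacent, and agree when c <> c', since they are
   identified. *)
Definition end_col (g : gadget nb) (s : bool) : 'I_k :=
  if gc g == gc' g then (if uses g false (+) s then gc g else other (gc g) (gc g))
  else if uses g false then gc g else gc' g.

Definition first_col (g : gadget nb) (s : bool) : 'I_k :=
  if end_col g s == gcol g s then other (gcol g s) (lab (gpig g s)) else gcol g s.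

Lemma end_col_unused g s : end_col g s != gcol g s -> ~~ uses g s.
Proof.
apply: contraNN => used; have := uses_not_both g; rewrite /end_col /gcol.
case: s used => -> /=; last by rewrite if_same eqxx.
by rewrite andbT => /negbTE ->; case: (gc g =P gc' g) => [->|_] /=; rewrite eqxx.
Qed.

Lemma first_col_neq_end g s : first_col g s != end_col g s.
Proof.
rewrite /first_col; case: (end_col g s =P gcol g s) => [->|/eqP ne]; last by rewrite eq_sym.
by case/andP: (otherP (gcol g s) (lab (gpig g s)) card_colours_gt2).
Qed.

Lemma first_col_neq_lab g s : first_col g s != lab (gpig g s).
Proof.
rewrite /first_col; case: (end_col g s =P gcol g s) => [_|/eqP /end_col_unused].
  by case/andP: (otherP (gcol g s) (lab (gpig g s)) card_colours_gt2).
by rewrite eq_sym.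
Qed.

Lemma gcol_first_or_end g s : (gcol g s == first_col g s) || (gcol g s == end_col g s).
Proof. by rewrite /first_col; case: (end_col g s =P gcol g s) => [->|_]; rewrite eqxx ?orbT. Qed.

Lemma end_col_split g : gc g = gc' g -> end_col g false != end_col g true.
Proof.
move=> same; rewrite /end_col same eqxx addbT addbF.
have := otherP (gc' g) (gc' g) card_colours_gt2; case: (uses g false) => /andP [ne _] //.
by rewrite eq_sym.
Qed.

Definition colouring (x : raw_t nb) : 'I_k :=
  match x with
  | inl (inl i) => lab i
  | inl (inr (g, s, a)) => perm_pair l1 lk (first_col g s) (end_col g s) a
  | inr (inl p) => pre_col p
  | inr (inr t) => Ordinal (ltn_pmod t k_gt0)
  end.

Lemma colouring_l1 g s : colouring (cl g s l1) = first_col g s.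
Proof. by rewrite /= perm_pairL ?l1_neq_lk ?first_col_neq_end. Qed.

Lemma colouring_lk g s : colouring (cl g s lk) = end_col g s.
Proof. exact: perm_pairR. Qed.

Lemma colouring_rep x : colouring (rep sigma x) = colouring x.
Proof.
case: x => [[i|[[g [|]] a]]|[p|t]] //=.
  case: ifP => // /andP [ne /eqP a_last]; rewrite (_ : a = lk); last exact: val_inj.
  by rewrite /= !perm_pairR /end_col (negbTE ne).
by apply: val_inj => /=; rewrite sigma_mod modn_small ?ltn_ord.
Qed.

Lemma colouring_edge a b : rawE0 a b -> colouring a != colouring b.
Proof.
case: a => [[i|[[g s] a]]|[[g s]|t]]; case: b => [[i'|[[g2 s2] b]]|[[g2 s2]|t']] //=.
- move=> /andP [/eqP b0 /eqP ->]; rewrite (_ : b = l1); last exact: val_inj.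
  by rewrite -/(colouring (cl g2 s2 l1)) colouring_l1 eq_sym first_col_neq_lab.
- move=> /andP [/eqP <-] /orP [/andP [/eqP <- ab] | /and4P [ss2 same /eqP a_k /eqP b_k]].
    by apply: contra ab => /eqP /perm_inj ->.
  have -> : a = lk by apply: val_inj.
  have -> : b = lk by apply: val_inj.
  rewrite -/(colouring (cl g s lk)) -/(colouring (cl g s2 lk)) !colouring_lk.
  have := end_col_split (eqP same).
  by case: s s2 ss2 => -[] //= _; rewrite eq_sym.
- move=> /and4P [/eqP <- /eqP <- b_pos b_lt]; rewrite -[pre_col _]/(gcol g s).
  have b_l1 : b != l1 by rewrite -(inj_eq val_inj) /= -lt0n.
  have b_lk : b != lk by rewrite -(inj_eq val_inj) /= neq_ltn b_lt.
  case/orP: (gcol_first_or_end g s) => /eqP ->.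
    by rewrite -{1}(colouring_l1 g s) /= (inj_eq perm_inj) eq_sym.
  by rewrite -{1}(colouring_lk g s) /= (inj_eq perm_inj) eq_sym.
- case/andP => tt' /existsP [s /and3P [_ s_le lt_s]].
  rewrite -(inj_eq val_inj) /=.
  case: (ltngtP t t') => [lt|gt|eq]; last by move: tt'; rewrite (val_inj eq) eqxx.
    by apply: neq_modn_window; lia.
  by rewrite eq_sym; apply: neq_modn_window; lia.
Qed.

Lemma colourable_of_labels : G_colourable sigma.
Proof.
exists colouring => x y _ _ /existsP [a /existsP [b /and3P [ab /eqP <- /eqP <-]]].
rewrite !colouring_rep; case/orP: ab => /colouring_edge //; by rewrite eq_sym.
Qed.

End ColouringOfLabels.

Section LabelsOfColouring.
Variable f : raw_t nb -> 'I_k.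
Hypothesis f_proper :
  forall x y, x \in GV sigma -> y \in GV sigma -> Gadj sigma x y -> f x != f y.

Local Notation F a := (f (rep sigma a)).

Lemma F_edge a b : rawE0 a b -> F a != F b.
Proof.
move=> ab; apply: f_proper; rewrite ?imset_f //.
by apply/existsP; exists a; apply/existsP; exists b; rewrite /rawE ab !eqxx.
Qed.

(* The colour of z_(u+1), with an arbitrary value l1 past the end of the chain. *)
Definition chain_col (u : nat) : 'I_k := if insub u is Some t then F (zv t) else l1.

Lemma chain_colE (t : 'I_(zM nb)) : chain_col t = F (zv t).
Proof. by rewrite /chain_col valK. Qed.

Lemma chain_col_window s u v : s + k <= zM nb ->
  s <= u < s + k -> s <= v < s + k -> chain_col u = chain_col v -> u = v.
Proof.
move=> window u_in v_in; have u_lt : u < zM nb by lia.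
have v_lt : v < zM nb by lia.
have s_lt : s < zM nb by have := k_gt0; lia.
rewrite -[u]/(val (Ordinal u_lt)) -[v]/(val (Ordinal v_lt)) !chain_colE.
apply: contra_eq => uv; apply: F_edge => /=; rewrite -(inj_eq val_inj) /= uv.
by apply/existsP; exists (Ordinal s_lt); apply/and3P; split => /=; lia.
Qed.

Lemma F_pre p : F (pv p) = chain_col (pre_col p).
Proof.
rewrite -[F (pv p)]/(F (zv (sigma p))) -chain_colE.
by rewrite (window_modn card_colours_le chain_col_window) // sigma_mod modn_small ?ltn_ord.
Qed.

Lemma zM_ge (g : gadget nb) : k <= zM nb.
Proof. by rewrite /zM leq_pmulr //; apply/card_gt0P; exists (g, false). Qed.

Lemma clique_last_col (g : gadget nb) s :
  F (pig (gpig g s)) = F (pv (g, s)) -> F (cl g s lk) = F (pv (g, s)).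
Proof.
move=> pig_pre.
have clique_inj : injective (fun a => F (cl g s a)).
  by move=> a b; apply: contra_eq => ab; apply: F_edge; rewrite /= !eqxx ab.
have /codomP [j col_j] := inj_card_onto clique_inj (leqnn _) (F (pv (g, s))).
rewrite col_j; suff -> : lk = j by [].
apply/val_inj/eqP; apply: contraT => /= j_ne.
have [j0|j_pos] := posnP j.
  have edge : rawE0 (pig (gpig g s)) (cl g s j) by rewrite /= j0 /gpig !eqxx.
  by move: (F_edge edge); rewrite pig_pre col_j eqxx.
have edge : rawE0 (pv (g, s)) (cl g s j).
  by rewrite /= !eqxx j_pos /=; move: j_ne; have := ltn_ord j; lia.
by move: (F_edge edge); rewrite col_j eqxx.
Qed.

Lemma gadget_unlabelled (g : gadget nb) :
  F (pig (gi g)) = chain_col (gc g) -> F (pig (gi' g)) = chain_col (gc' g) -> False.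
Proof.
move=> lab_l lab_r.
have clique_end s :
    F (pig (gpig g s)) = chain_col (gcol g s) -> F (cl g s lk) = chain_col (gcol g s).
  by move=> lab_s; rewrite clique_last_col F_pre // lab_s F_pre.
have end_l := clique_end false lab_l; have end_r := clique_end true lab_r.
have [same|diff] := eqVneq (gc g) (gc' g).
  have edge : rawE0 (cl g false lk) (cl g true lk) by rewrite /= same !eqxx.
  by move: (F_edge edge); rewrite end_l end_r /gcol same eqxx.
have merged : F (cl g true lk) = F (cl g false lk) by rewrite /= diff eqxx.
move: diff; rewrite -(inj_eq val_inj) => /eqP[].
apply: (chain_col_window (s := 0)); rewrite ?add0n ?ltn_ord ?zM_ge //.
by rewrite -end_l -end_r merged.
Qed.

Definition label (i : 'I_n) : 'I_k := odflt l1 [pick c : 'I_k | chain_col c == F (pig i)].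

Lemma labelP i : k <= zM nb -> chain_col (label i) = F (pig i).
Proof.
move=> long_chain; rewrite /label; case: pickP => [c /eqP //|none].
have [c col_c] := window_onto card_colours_le chain_col_window long_chain (F (pig i)).
by move: (none c); rewrite col_c eqxx.
Qed.

Lemma labels_of_colouring : injective (fun i => nb i (label i)).
Proof.
suff lt_case (i i' : 'I_n) : i < i' -> nb i (label i) = nb i' (label i') -> False.
  move=> i i' /= same; apply: val_inj; case: (ltngtP i i') => // [lt|gt].
    by case: (lt_case _ _ lt same).
  by case: (lt_case _ _ gt (esym same)).
move=> lt same; have gP : gad_pred nb ((i, label i), (i', label i')).
  by rewrite /gad_pred /= lt same eqxx.
pose g : gadget nb := exist (gad_pred nb) _ gP.
by apply: (@gadget_unlabelled g); rewrite /= labelP // (zM_ge g).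
Qed.

End LabelsOfColouring.

Lemma colourable_labels :
  G_colourable sigma <-> exists lab : 'I_n -> 'I_k, injective (fun i => nb i (lab i)).
Proof.
split=> [[f f_proper] | [lab lab_inj]]; last exact: colourable_of_labels lab_inj.
by exists (label f); exact: labels_of_colouring f_proper.
Qed.

End Reduction.

Theorem proposition3p4 (d : nat) :
  exists C : nat,
  forall (k n m : nat) (nb : 'I_n -> 'I_k -> 'I_m),
    3 <= k ->
    (forall i, injective (nb i)) ->
    (forall j : 'I_m, #|[set i | j \in Jset nb i]| <= d * k) ->
    forall sigma : pre_t nb -> 'I_(zM nb),
      injective sigma ->
      (forall p, val (sigma p) = val (pre_col p) %[mod k]) ->
      [/\ #|GV sigma| <= C * k ^ 4 * n,
          (forall x, x \in GV sigma -> Gdeg sigma x <= C * k ^ 2),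
          G_colourable sigma <-> php_map nb
        & G_colourable sigma <-> php_eqs nb].
Proof.
exists (6 * d + 7) => k n m nb k_ge3 nb_inj hole_deg sigma sigma_inj sigma_mod.
have colourable_map : G_colourable sigma <-> php_map nb :=
  iff_trans (colourable_labels k_ge3 sigma_mod) (iff_sym (php_map_labels nb)).
split.
- exact: card_GV.
- by move=> x _; apply: Gdeg_le.
- exact: colourable_map.
- exact: iff_trans colourable_map (php_map_eqs nb).
Qed.
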